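(* Let $\Lambda$ be a rank-2 Bratteli diagram. (1) Suppose a path $\alpha\in\Lambda$ has two factorisations $\alpha=\mu g\nu$ and $\alpha=\beta h\gamma$ in which $g,h\in\Lambda^{e_1}$ are blue edges and $d(\mu)$ and $d(\beta)$ have the same first coordinate. Then $o(g)=o(h)$. (2) For every blue path $\beta=\beta_1\beta_2\cdots\beta_n$ with blue edges $\beta_1,\dots,\beta_n$, $o(\beta)=\operatorname{lcm}(o(\beta_1),\dots,o(\beta_n))$.
   Context: A $2$-graph is a countable category $\Lambda$ with a functor $d:\Lambda\to\mathbb N^2$ satisfying unique factorisation (if $d(\lambda)=m+n$ there are unique $\mu,\nu$ with $d(\mu)=m,d(\nu)=n,\lambda=\mu\nu$). Vertices = degree-$0$ paths; $r,s$ range/source; $\Lambda^n=d^{-1}(n)$; $e_1=(1,0),e_2=(0,1)$; $vE=E\cap r^{-1}(v)$, $Ev=E\cap s^{-1}(v)$. Row-finite: each $v\Lambda^n$ finite. Blue paths: degree in $\mathbb N e_1$; red paths: degree in $\mathbb Ne_2$. $\lambda(m,n)$ is the unique path with $\lambda=\lambda'\lambda(m,n)\lambda''$, $d(\lambda')=m$, $d(\lambda(m,n))=n-m$; $\lambda(n)=\lambda(n,n)$. A cycle: $d(\lambda)\ne0$, $r(\lambda)=s(\lambda)$, $\lambda(n)\ne s(\lambda)$ for $0<n<d(\lambda)$; isolated: no $n\le d(\lambda)$ with $r(\lambda)\Lambda^n\setminus\{\lambda(0,n)\}\neq\emptyset$ and no $n\le d(\lambda)$ with $\Lambda^ns(\lambda)\setminus\{\lambda(d(\lambda)-n,d(\lambda))\}\neq\emptyset$.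 A rank-2 Bratteli diagram of depth $N\in\mathbb N\cup\{\infty\}$ is a row-finite 2-graph with $\Lambda^0=\bigsqcup_{0\le n\le N}V_n$ (all $n\in\mathbb N$ if $N=\infty$), each $V_n$ nonempty finite, such that: every blue edge $e$ has $r(e)\in V_n,s(e)\in V_{n+1}$ for some $n$; every vertex $v$ with $\Lambda^{e_1}v=\emptyset$ lies in $V_0$ and every vertex $v$ with $v\Lambda^{e_1}=\emptyset$ lies in $V_N$ (none if $N=\infty$); every vertex lies on an isolated cycle of red edges and every red edge has range and source in the same $V_n$. For a blue path $\alpha$, let $f$ be the unique red edge with $s(f)=r(\alpha)$ and $\mathcal F(\alpha)$ the unique blue path with $f\alpha=\mathcal F(\alpha)f'$ for some red edge $f'$; $o(\alpha)=\min\{k>0:\mathcal F^k(\alpha)=\alpha\}$. *)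

From mathcomp Require Import all_boot.
From Stdlib Require Import ClassicalEpsilon.
Set Implicit Arguments. Unset Strict Implicit. Unset Printing Implicit Defensive.

(** Raw data of a (countable) category with a degree map to N^2.
    Objects = vertices (identified with the degree-0 paths idm v),
    morphisms = paths.  Composition [cmp l m] = "l m" (l after m, so
    src l = rng m is required), as in the paper's convention for k-graphs. *)
Record graph2 := Graph2 {
  Obj : countType;
  Mor : countType;
  rng : Mor -> Obj;
  src : Mor -> Obj;
  idm : Obj -> Mor;
  cmp : Mor -> Mor -> Mor;
  deg : Mor -> nat * nat }.

Definition dadd (p q : nat * nat) : nat * nat := (p.1 + q.1, p.2 + q.2)%N.
Definition dsub (p q : nat * nat) : nat * nat := (p.1 - q.1, p.2 - q.2)%N.
Definition dle (p q : nat * nat) : Prop := (p.1 <= q.1)%N /\ (p.2 <= q.2)%N.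
Definition e1 : nat * nat := (1, 0)%N.
Definition e2 : nat * nat := (0, 1)%N.
Definition d0 : nat * nat := (0, 0)%N.

Section TwoGraph.
Context (L : graph2).
Local Notation Mor := (Mor L).
Local Notation Obj := (Obj L).
Local Notation rng := (@rng L).
Local Notation src := (@src L).
Local Notation idm := (@idm L).
Local Notation cmp := (@cmp L).
Local Notation deg := (@deg L).

Definition is_2graph : Prop :=
  (forall v, rng (idm v) = v /\ src (idm v) = v) /\
  (forall l m, src l = rng m -> rng (cmp l m) = rng l /\ src (cmp l m) = src m) /\
  (forall l, cmp (idm (rng l)) l = l /\ cmp l (idm (src l)) = l) /\
  (forall l m n, src l = rng m -> src m = rng n ->
         cmp (cmp l m) n = cmp l (cmp m n)) /\
  (forall v, deg (idm v) = d0) /\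
  (forall l m, src l = rng m -> deg (cmp l m) = dadd (deg l) (deg m)) /\
  (forall l m n, deg l = dadd m n ->
         exists! p : Mor * Mor,
           [/\ src p.1 = rng p.2, deg p.1 = m, deg p.2 = n & l = cmp p.1 p.2]).

Definition row_finite : Prop :=
  forall v n, exists s : seq Mor, forall l, rng l = v -> deg l = n -> l \in s.

Definition blue (l : Mor) : Prop := (deg l).2 = 0%N.
Definition red (l : Mor) : Prop := (deg l).1 = 0%N.

(** [seg l m n p] : p = l(m,n), i.e. l = l' p l'' with d(l') = m and
    d(p) = n - m  (for m <= n <= d(l)). *)
Definition seg (l : Mor) (m n : nat * nat) (p : Mor) : Prop :=
  dle m n /\ dle n (deg l) /\
  exists a b, [/\ src a = rng p, src p = rng b, deg a = m, deg p = dsub n m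
                & l = cmp a (cmp p b)].

(** l(n) = v (as the degree-0 path idm v). *)
Definition vtx (l : Mor) (n : nat * nat) (v : Obj) : Prop := seg l n n (idm v).

Definition is_cycle (l : Mor) : Prop :=
  [/\ deg l <> d0, rng l = src l &
      forall n, dle n (deg l) -> n <> d0 -> n <> deg l -> ~ vtx l n (src l)].

Definition isolated (l : Mor) : Prop :=
  (forall n m, dle n (deg l) -> rng m = rng l -> deg m = n -> seg l d0 n m) /\
  (forall n m, dle n (deg l) -> src m = src l -> deg m = n ->
     seg l (dsub (deg l) n) (deg l) m).

Definition lies_on (v : Obj) (l : Mor) : Prop :=
  exists n, dle n (deg l) /\ vtx l n v.

Definition le_depth (n : nat) (N : option nat) : Prop :=
  match N with Some N => (n <= N)%N | None => True end.

(** Rank-2 Bratteli diagram of depth N (None = infinity); V_n = lev^-1(n). *)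
Definition bratteli (N : option nat) (lev : Obj -> nat) : Prop :=
  (forall v, le_depth (lev v) N) /\
  (forall n, le_depth n N -> exists v, lev v = n) /\
  (forall n, exists s : seq Obj, forall v, lev v = n -> v \in s) /\
  (forall e, deg e = e1 -> lev (src e) = (lev (rng e)).+1) /\
  (forall v, (forall e, deg e = e1 -> src e <> v) -> lev v = 0%N) /\
  (forall v, (forall e, deg e = e1 -> rng e <> v) -> N = Some (lev v)) /\
  (forall v, exists l, [/\ red l, is_cycle l, isolated l & lies_on v l]) /\
  (forall f, deg f = e2 -> lev (rng f) = lev (src f)).

Definition Frel (a b : Mor) : Prop :=
  exists f f', [/\ deg f = e2, deg f' = e2, src f = rng a, src b = rng f'
                   & blue b /\ cmp f a = cmp b f'].

Definition Fmap (a : Mor) : Mor := epsilon (inhabits a) (Frel a).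

Definition ordF (a : Mor) : nat :=
  epsilon (inhabits 0%N) (fun k => [/\ (0 < k)%N, iter k Fmap a = a &
                    forall j, (0 < j)%N -> (j < k)%N -> iter j Fmap a <> a]).

Fixpoint cmps (b : Mor) (bs : seq Mor) : Mor :=
  match bs with [::] => b | c :: cs => cmp b (cmps c cs) end.

Definition composable_seq (b : Mor) (bs : seq Mor) : bool :=
  path (fun x y => src x == rng y) b bs.

End TwoGraph.

From mathcomp Require Import all_boot zify.
From Stdlib Require Import ClassicalEpsilon.
Set Implicit Arguments. Unset Strict Implicit. Unset Printing Implicit Defensive.

(* Unique factorisation and the isolated red cycles give every vertex exactly
   one red edge in and one red edge out.  Hence F is a well-defined injective
   map on blue paths preserving degree and level, F(xy) = F(x)F(y), and a
   commuting square r a = b r' whose red sides have length t forces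
   b = F^t(a).  Two blue edges in the same column of a path bound such a
   square, so one is an F-iterate of the other and, F being injective, their
   orbits have the same length.  By row-finiteness every F-orbit is finite, so
   F^k x = x iff o(x) divides k; by unique factorisation F^k fixes
   b_1 ... b_n iff it fixes every b_i, which is the lcm formula. *)

Section Iterates.
Variables (T : Type) (f : T -> T).

Lemma iter_fixed_mul m q x : iter m f x = x -> iter (q * m) f x = x.
Proof. by move=> fixm; elim: q => [|q IHq] //; rewrite mulSn iterD IHq fixm. Qed.

Variable P : T -> Prop.
Hypothesis P_f : forall y, P y -> P (f y).
Hypothesis f_inj : forall y z, P y -> P z -> f y = f z -> y = z.

Lemma iter_invariant k y : P y -> P (iter k f y).
Proof. by move=> Py; elim: k => //= k; apply: P_f. Qed.

Lemma iter_inj k y z : P y -> P z -> iter k f y = iter k f z -> y = z.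
Proof.
move=> Py Pz; elim: k => //= k IHk fk; apply: IHk.
exact: f_inj (iter_invariant k Py) (iter_invariant k Pz) fk.
Qed.

Lemma iter_fixed_shift k t y : P y ->
  iter k f (iter t f y) = iter t f y <-> iter k f y = y.
Proof.
move=> Py; rewrite -iterD addnC iterD; split => [|-> //].
exact: iter_inj (iter_invariant k Py) Py.
Qed.

End Iterates.

Lemma iter_period (T : eqType) (f : T -> T) x :
  (exists2 k, 0 < k & iter k f x = x) ->
  exists2 m, 0 < m & forall k, iter k f x = x <-> m %| k.
Proof.
move=> ex_k.
have ex_P : exists k, (0 < k) && (iter k f x == x).
  by case: ex_k => k k_gt0 fixk; exists k; rewrite k_gt0 fixk eqxx.
case: (ex_minnP ex_P) => m /andP[m_gt0 /eqP fixm] min_m.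
exists m => // k; split => [fixk | /dvdnP[q ->]]; last exact: iter_fixed_mul.
have fix_mod : iter (k %% m) f x = x.
  by move: fixk; rewrite {1}(divn_eq k m) addnC iterD iter_fixed_mul.
rewrite /dvdn; apply: contraTT (ltn_pmod k m_gt0) => mod_neq0.
by rewrite -leqNgt min_m // lt0n mod_neq0 fix_mod /=.
Qed.

(* Pigeonhole on the first [size s + 1] iterates, then cancel by injectivity. *)
Lemma iter_returns (T : eqType) (f : T -> T) (P : T -> Prop) x (s : seq T) :
  (forall y, P y -> P (f y)) -> (forall y z, P y -> P z -> f y = f z -> y = z) ->
  P x -> (forall k, iter k f x \in s) -> exists2 k, 0 < k & iter k f x = x.
Proof.
move=> P_f f_inj Px orbit_s.
pose orbit := [seq iter i f x | i <- iota 0 (size s).+1].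
have orbit_sub : {subset orbit <= s} by move=> _ /mapP[i _ ->].
have /(uniqPn x)[i [j [lt_ij]]] : ~~ uniq orbit.
  by apply/negP => /uniq_leq_size/(_ orbit_sub); rewrite size_map size_iota ltnn.
rewrite size_map size_iota => lt_j.
rewrite !(nth_map 0) ?size_iota ?nth_iota ?(ltn_trans lt_ij) //= !add0n.
rewrite -(subnKC (ltnW lt_ij)) iterD => fixij.
exists (j - i); first by rewrite subn_gt0.
exact: esym (iter_inj P_f f_inj Px (iter_invariant P_f _ Px) fixij).
Qed.

Lemma ordF_char (L : graph2) (x : Mor L) m : 0 < m ->
  (forall k, iter k (@Fmap L) x = x <-> m %| k) -> ordF x = m.
Proof.
move=> m_gt0 fixP; rewrite /ordF; set P := fun k => _.
have Pm : P m.
  split=> // [|j j_gt0 lt_jm /fixP/(dvdn_leq j_gt0)]; first exact/fixP.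
  by rewrite leqNgt lt_jm.
have := epsilon_spec (inhabits 0) P (ex_intro _ m Pm).
set k := epsilon _ _ => -[k_gt0 /fixP/(dvdn_leq k_gt0) le_mk min_k].
apply/eqP; rewrite eqn_leq le_mk andbT leqNgt; apply/negP => lt_mk.
exact: min_k m_gt0 lt_mk (proj2 (fixP m) (dvdnn m)).
Qed.

Lemma dvdn_foldr_lcmn (ns : seq nat) k : (foldr lcmn 1 ns %| k) = all (dvdn^~ k) ns.
Proof. by elim: ns => [|n ns IHns] /=; rewrite ?dvd1n ?dvdn_lcm ?IHns. Qed.

Lemma foldr_lcmn_gt0 (ns : seq nat) : all (leq 1) ns -> 0 < foldr lcmn 1 ns.
Proof. by elim: ns => [|n ns IHns] //= /andP[n_gt0 /IHns]; rewrite lcmn_gt0 n_gt0. Qed.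

Lemma dadd_injr (x y z : nat * nat) : dadd x y = dadd x z -> y = z.
Proof. by case: x y z => [? ?] [? ?] [? ?] [/addnI -> /addnI ->]. Qed.

Lemma dadd_injl (x y z : nat * nat) : dadd y x = dadd z x -> y = z.
Proof. by case: x y z => [? ?] [? ?] [? ?] [/addIn -> /addIn ->]. Qed.

Section TwoGraphs.
Variable L : graph2.
Hypothesis HL : is_2graph L.

Lemma rng_idm (v : Obj L) : rng (idm v) = v.
Proof. by case: HL => H _; case: (H v). Qed.

Lemma src_idm (v : Obj L) : src (idm v) = v.
Proof. by case: HL => H _; case: (H v). Qed.

Lemma rng_cmp (l m : Mor L) : src l = rng m -> rng (cmp l m) = rng l.
Proof. by case: HL => _ [H _] lm; case: (H l m lm). Qed.

Lemma src_cmp (l m : Mor L) : src l = rng m -> src (cmp l m) = src m.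
Proof. by case: HL => _ [H _] lm; case: (H l m lm). Qed.

Lemma cmp_idml (l : Mor L) : cmp (idm (rng l)) l = l.
Proof. by case: HL => _ [_ [H _]]; case: (H l). Qed.

Lemma cmp_idmr (l : Mor L) : cmp l (idm (src l)) = l.
Proof. by case: HL => _ [_ [H _]]; case: (H l). Qed.

Lemma cmpA (l m n : Mor L) : src l = rng m -> src m = rng n ->
  cmp (cmp l m) n = cmp l (cmp m n).
Proof. by case: HL => _ [_ [_ [H _]]]; apply: H. Qed.

Lemma deg_idm (v : Obj L) : deg (idm v) = d0.
Proof. by case: HL => _ [_ [_ [_ [H _]]]]. Qed.

Lemma deg_cmp (l m : Mor L) : src l = rng m -> deg (cmp l m) = dadd (deg l) (deg m).
Proof. by case: HL => _ [_ [_ [_ [_ [H _]]]]]; apply: H. Qed.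

Lemma unique_factorisation (l : Mor L) m n : deg l = dadd m n ->
  exists! p : Mor L * Mor L,
    [/\ src p.1 = rng p.2, deg p.1 = m, deg p.2 = n & l = cmp p.1 p.2].
Proof. by case: HL => _ [_ [_ [_ [_ [_ H]]]]]; apply: H. Qed.

Lemma factorise (l : Mor L) m n : deg l = dadd m n ->
  exists a b, [/\ src a = rng b, deg a = m, deg b = n & l = cmp a b].
Proof. by case/unique_factorisation=> [[a b] [[/= ? ? ? ?] _]]; exists a, b. Qed.

Lemma cmp_injl (a b a' b' : Mor L) : src a = rng b -> src a' = rng b' ->
  cmp a b = cmp a' b' -> deg a = deg a' -> a = a' /\ b = b'.
Proof.
move=> ab a'b' eq_cmp eq_dega.
have eq_degb : deg b = deg b'.
  by apply: (@dadd_injr (deg a)); rewrite -(deg_cmp ab) eq_cmp (deg_cmp a'b') eq_dega.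
have [p [_ p_uniq]] := unique_factorisation (deg_cmp ab).
have := p_uniq (a', b') (And4 a'b' (esym eq_dega) (esym eq_degb) eq_cmp).
by rewrite (p_uniq (a, b) (And4 ab erefl erefl erefl)) => -[].
Qed.

Lemma cmp_injr (a b a' b' : Mor L) : src a = rng b -> src a' = rng b' ->
  cmp a b = cmp a' b' -> deg b = deg b' -> a = a' /\ b = b'.
Proof.
move=> ab a'b' eq_cmp eq_degb; apply: cmp_injl => //.
by apply: (@dadd_injl (deg b)); rewrite -(deg_cmp ab) eq_cmp (deg_cmp a'b') eq_degb.
Qed.

Lemma deg0_idm (a : Mor L) : deg a = d0 -> a = idm (rng a) /\ a = idm (src a).
Proof.
move=> a0; have [p [_ p_uniq]] := unique_factorisation (m := d0) (n := d0) a0.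
have := p_uniq (a, idm (src a))
  (And4 (esym (rng_idm _)) a0 (deg_idm _) (esym (cmp_idmr a))).
have := p_uniq (idm (rng a), a) (And4 (src_idm _) (deg_idm _) a0 (esym (cmp_idml a))).
by move=> -> [].
Qed.

Lemma seg_uniq (l : Mor L) m n p p' : seg l m n p -> seg l m n p' -> p = p'.
Proof.
move=> [_ [_ [a [b [ap pb dega degp ->]]]]].
move=> [_ [_ [a' [b' [ap' pb' dega' degp' eq_l]]]]].
have [_ eq_pb] := cmp_injl (etrans ap (esym (rng_cmp pb)))
  (etrans ap' (esym (rng_cmp pb'))) eq_l (etrans dega (esym dega')).
by case: (cmp_injl pb pb' eq_pb (etrans degp (esym degp'))).
Qed.

Lemma same_column_red_square (mu g nu be h ga : Mor L) :
  src mu = rng g -> src g = rng nu -> src be = rng h -> src h = rng ga ->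
  cmp mu (cmp g nu) = cmp be (cmp h ga) -> deg g = deg h ->
  (deg mu).1 = (deg be).1 -> (deg mu).2 <= (deg be).2 ->
  exists t (r r' : Mor L), [/\ deg r = (0, t), deg r' = (0, t),
    src r = rng h, src g = rng r' & cmp r h = cmp g r'].
Proof.
move=> mug gnu beh hga eq_fact deg_gh eq_col le_mu_be.
set t := (deg be).2 - (deg mu).2.
have : deg be = dadd (deg mu) (0, t).
  rewrite /dadd /t; move: eq_col le_mu_be.
  by case: (deg be) (deg mu) => [? ?] [? ?] /= -> ?; f_equal; lia.
case/factorise=> [be1 [r [be1r degbe1 degr eq_be]]].
have rh : src r = rng h by rewrite -beh eq_be (src_cmp be1r).
have rhga : src r = rng (cmp h ga) by rewrite (rng_cmp hga).
have eq_fact1 : cmp mu (cmp g nu) = cmp be1 (cmp r (cmp h ga)).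
  by rewrite eq_fact eq_be (cmpA be1r rhga).
have [_ eq_gnu] := cmp_injl (etrans mug (esym (rng_cmp gnu)))
  (etrans be1r (esym (rng_cmp rhga))) eq_fact1 (esym degbe1).
have : deg nu = dadd (0, t) (deg ga).
  have := congr1 (@deg L) eq_gnu.
  rewrite (deg_cmp gnu) (deg_cmp rhga) (deg_cmp hga) deg_gh degr /dadd /=.
  by case: (deg h) (deg nu) (deg ga) => [? ?] [? ?] [? ?] /= [? ?]; f_equal; lia.
case/factorise=> [nu1 [nu2 [nu12 degnu1 degnu2 eq_nu]]].
have gnu1 : src g = rng nu1 by rewrite gnu eq_nu (rng_cmp nu12).
have eq_fact2 : cmp (cmp g nu1) nu2 = cmp (cmp r h) ga.
  by rewrite (cmpA gnu1 nu12) -eq_nu eq_gnu (cmpA rh hga).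
have [eq_sq _] :=
  cmp_injr (etrans (src_cmp gnu1) nu12) (etrans (src_cmp rh) hga) eq_fact2 degnu2.
by exists t, r, nu1; split.
Qed.

Section RedCycles.
Hypothesis red_cycles :
  forall v : Obj L, exists l, [/\ red l, is_cycle l, isolated l & lies_on v l].

Lemma red_cycle_at (v : Obj L) : exists (l a b : Mor L) (j k : nat),
  [/\ isolated l, l = cmp a b, src a = v, rng b = v & rng l = src l] /\
  [/\ deg a = (0, j), deg b = (0, k - j), deg l = (0, k), 0 < k & j <= k].
Proof.
have [l [red_l [l_ne0 l_loop _] iso_l [n [le_nl [_ [_ [a [b]]]]]]]] := red_cycles v.
rewrite rng_idm src_idm => -[av vb dega _]; rewrite vb cmp_idml => eq_l.
have degl := deg_cmp (etrans av vb); rewrite -eq_l in degl.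
exists l, a, b, n.2, (deg l).2; split; first by split; rewrite // -vb.
move: red_l l_ne0 le_nl degl; rewrite /red /dle /dadd /d0 dega.
case: (deg l) => [l1 l2]; case: (deg b) => [b1 b2]; case: n {dega} => [n1 n2] /=.
move=> -> l_ne0 [_ le_n2] [b1_0 b2_eq].
have l2_gt0 : 0 < l2 by case: l2 l_ne0 {le_n2 b2_eq}.
by split=> //; f_equal; lia.
Qed.

Lemma red_loop_at (v : Obj L) : exists c : Mor L,
  [/\ src c = v, rng c = v & exists2 k, 0 < k & deg c = (0, k)].
Proof.
have [l [a [b [j [k [[_ eq_l av vb l_loop] [dega degb _ k_gt0 le_jk]]]]]]] :=
  red_cycle_at v.
have ab : src a = rng b by rewrite av.
have ba : src b = rng a by rewrite -(src_cmp ab) -eq_l -l_loop eq_l (rng_cmp ab).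
exists (cmp b a); rewrite (src_cmp ba) (rng_cmp ba); split=> //; exists k => //.
by rewrite (deg_cmp ba) dega degb /dadd /=; f_equal; lia.
Qed.

Lemma red_edge_out (v : Obj L) : exists f : Mor L, deg f = e2 /\ src f = v.
Proof.
have [c [cv _ [k k_gt0 degc]]] := red_loop_at v.
have : deg c = dadd (0, k.-1) e2 by rewrite degc /dadd /=; f_equal; lia.
case/factorise=> [x [f [xf _ degf eq_c]]].
by exists f; rewrite -cv eq_c (src_cmp xf).
Qed.

Lemma red_edge_out_uniq (f f' : Mor L) : deg f = e2 -> deg f' = e2 ->
  src f = src f' -> f = f'.
Proof.
move=> degf degf' ff'.
have [l [a [b [j [k [[[_ iso_l] eq_l af bf l_loop] [dega degb degl k_gt0 le_jk]]]]]]] :=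
  red_cycle_at (src f).
have fb : src f = rng b by rewrite bf.
have ab : src a = rng b by rewrite af.
(* Either [src f] is the base point of [l], or [f b] is a final segment of [l]. *)
case: j le_jk dega degb => [|j] le_jk dega degb.
- have l_src : src l = src f.
    by rewrite -l_loop eq_l (rng_cmp ab) (deg0_idm dega).2 rng_idm.
  have le_e2 : dle e2 (deg l) by rewrite degl /dle /=; split; lia.
  by apply: seg_uniq (iso_l _ _ le_e2 _ degf) (iso_l _ _ le_e2 _ degf'); rewrite -?ff'.
- have f'b : src f' = rng b by rewrite -ff'.
  have src_fb g : src g = rng b -> src (cmp g b) = src l.
    by move=> gb; rewrite (src_cmp gb) eq_l (src_cmp ab).
  have deg_fb g : deg g = e2 -> src g = rng b -> deg (cmp g b) = (0, k - j).
    by move=> degg gb; rewrite (deg_cmp gb) degg degb /dadd /=; f_equal; lia.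
  have le_fb : dle (0, k - j) (deg l) by rewrite degl /dle /=; split; lia.
  have := seg_uniq (iso_l _ _ le_fb (src_fb _ fb) (deg_fb _ degf fb))
                   (iso_l _ _ le_fb (src_fb _ f'b) (deg_fb _ degf' f'b)).
  by case/(cmp_injl fb f'b)=> //; rewrite degf degf'.
Qed.

Lemma red_edge_in_uniq (f f' : Mor L) : deg f = e2 -> deg f' = e2 ->
  rng f = rng f' -> f = f'.
Proof.
move=> degf degf' ff'.
have [l [a [b [j [k [[[iso_l _] eq_l af bf l_loop] [dega degb degl k_gt0 le_jk]]]]]]] :=
  red_cycle_at (rng f).
have ab : src a = rng b by rewrite af.
case: (ltnP j k) => [lt_jk | le_kj].
- have af' : src a = rng f' by rewrite af.
  have rng_af g : src a = rng g -> rng (cmp a g) = rng l.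
    by move=> ag; rewrite (rng_cmp ag) eq_l (rng_cmp ab).
  have deg_af g : deg g = e2 -> src a = rng g -> deg (cmp a g) = (0, j.+1).
    by move=> degg ag; rewrite (deg_cmp ag) degg dega /dadd /=; f_equal; lia.
  have le_af : dle (0, j.+1) (deg l) by rewrite degl /dle /=; split; lia.
  have := seg_uniq (iso_l _ _ le_af (rng_af _ af) (deg_af _ degf af))
                   (iso_l _ _ le_af (rng_af _ af') (deg_af _ degf' af')).
  by case/(cmp_injr af af')=> //; rewrite degf degf'.
- have b0 : deg b = d0 by rewrite degb /d0; f_equal; lia.
  have l_rng : rng l = rng f.
    by rewrite l_loop eq_l (src_cmp ab) (deg0_idm b0).1 src_idm.
  have le_e2 : dle e2 (deg l) by rewrite degl /dle /=; split; lia.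
  by apply: seg_uniq (iso_l _ _ le_e2 _ degf) (iso_l _ _ le_e2 _ degf'); rewrite -?ff'.
Qed.

Lemma Frel_total (a : Mor L) : blue a -> exists b, Frel a b.
Proof.
move=> blue_a; have [f [degf fa]] := red_edge_out (rng a).
have : deg (cmp f a) = dadd (deg a) e2.
  by rewrite (deg_cmp fa) degf /dadd /=; f_equal; lia.
case/factorise=> [b [f' [bf' degb degf' eq_fa]]].
by exists b, f, f'; split; rewrite // /blue degb.
Qed.

Lemma Frel_functional (a b b' : Mor L) : Frel a b -> Frel a b' -> b = b'.
Proof.
move=> [f [f1 [degf degf1 fa bf1 [_ eq1]]]] [g [g1 [degg degg1 ga b'g1 [_ eq2]]]].
have eq_f : f = g by apply: red_edge_out_uniq; rewrite // fa ga.
subst g.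
by case: (cmp_injr bf1 b'g1 (etrans (esym eq1) eq2)); rewrite ?degf1 ?degg1.
Qed.

Lemma Frel_injective (a a' b : Mor L) : Frel a b -> Frel a' b -> a = a'.
Proof.
move=> [f [f1 [degf degf1 fa bf1 [_ eq1]]]] [g [g1 [degg degg1 ga bg1 [_ eq2]]]].
have eq_f1 : f1 = g1 by apply: red_edge_in_uniq; rewrite // -bf1 -bg1.
subst g1.
by case: (cmp_injl fa ga (etrans eq1 (esym eq2))); rewrite ?degf ?degg.
Qed.

Lemma Frel_deg (a b : Mor L) : Frel a b -> deg b = deg a.
Proof.
move=> [f [f1 [degf degf1 fa bf1 [_ eq_fa]]]].
have := deg_cmp fa; rewrite eq_fa (deg_cmp bf1) degf degf1 /dadd /=.
by case: (deg a) (deg b) => [? ?] [? ?] [? ?]; f_equal; lia.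
Qed.

Local Notation F := (@Fmap L).

Lemma Fmap_spec (a : Mor L) : blue a -> Frel a (F a).
Proof. by move/Frel_total=> ex_b; apply: epsilon_spec. Qed.

Lemma Fmap_deg (a : Mor L) : blue a -> deg (F a) = deg a.
Proof. by move/Fmap_spec/Frel_deg. Qed.

Lemma Fmap_blue (a : Mor L) : blue a -> blue (F a).
Proof. by move=> blue_a; rewrite /blue Fmap_deg. Qed.

Lemma Fmap_inj (a a' : Mor L) : blue a -> blue a' -> F a = F a' -> a = a'.
Proof.
move=> blue_a blue_a' eqF; apply: (Frel_injective (Fmap_spec blue_a)).
by rewrite eqF; apply: Fmap_spec.
Qed.

Lemma iter_Fmap_deg k (a : Mor L) : blue a -> deg (iter k F a) = deg a.
Proof.
move=> blue_a; elim: k => //= k IHk.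
by rewrite Fmap_deg // /blue IHk.
Qed.

Lemma iter_Fmap_blue k (a : Mor L) : blue a -> blue (iter k F a).
Proof. exact: (iter_invariant (P := @blue L) Fmap_blue k). Qed.

Lemma red_square_iter_Fmap t (a r b r' : Mor L) : blue a ->
  deg r = (0, t) -> deg r' = (0, t) -> src r = rng a -> src b = rng r' ->
  cmp r a = cmp b r' -> b = iter t F a.
Proof.
elim: t a r b r' => [|t IHt] a r b r' blue_a degr degr' ra br' eq_sq.
  move: eq_sq; rewrite (deg0_idm degr).2 (deg0_idm degr').1 ra -br'.
  by rewrite cmp_idml cmp_idmr.
have : deg r = dadd (0, t) e2 by rewrite degr /dadd /=; f_equal; lia.
case/factorise=> [r1 [f [r1f degr1 degf eq_r]]].
have fa : src f = rng a by rewrite -(src_cmp r1f) -eq_r.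
have : deg (cmp f a) = dadd (deg a) e2.
  by rewrite (deg_cmp fa) degf /dadd /=; f_equal; lia.
case/factorise=> [c [f1 [cf1 degc degf1 eq_fa]]].
have blue_c : blue c by rewrite /blue degc.
have Fa : c = F a.
  by apply: Frel_functional (Fmap_spec blue_a); exists f, f1; split.
have : deg r' = dadd (0, t) e2 by rewrite degr' /dadd /=; f_equal; lia.
case/factorise=> [r2 [f2 [r2f2 degr2 degf2 eq_r']]].
have r1c : src r1 = rng c by rewrite r1f -(rng_cmp cf1) -eq_fa (rng_cmp fa).
have br2 : src b = rng r2 by rewrite br' eq_r' (rng_cmp r2f2).
have eq_sq1 : cmp (cmp r1 c) f1 = cmp (cmp b r2) f2.
  by rewrite (cmpA r1c cf1) -eq_fa -(cmpA r1f fa) -eq_r eq_sq eq_r' (cmpA br2 r2f2).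
have [eq_sq2 _] := cmp_injr (etrans (src_cmp r1c) cf1) (etrans (src_cmp br2) r2f2)
  eq_sq1 (etrans degf1 (esym degf2)).
by rewrite iterSr -Fa; apply: IHt eq_sq2.
Qed.

Lemma same_column_iter_Fmap (mu g nu be h ga : Mor L) :
  src mu = rng g -> src g = rng nu -> src be = rng h -> src h = rng ga ->
  cmp mu (cmp g nu) = cmp be (cmp h ga) ->
  blue h -> deg g = deg h -> (deg mu).1 = (deg be).1 ->
  exists t, g = iter t F h \/ h = iter t F g.
Proof.
move=> mug gnu beh hga eq_fact blue_h deg_gh eq_col.
have blue_g : blue g by rewrite /blue deg_gh.
case: (leqP (deg mu).2 (deg be).2) => [le_mu_be | /ltnW le_be_mu].
- have [t [r [r' [degr degr' rh gr' eq_sq]]]] :=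
    same_column_red_square mug gnu beh hga eq_fact deg_gh eq_col le_mu_be.
  by exists t; left; apply: red_square_iter_Fmap eq_sq.
- have [t [r [r' [degr degr' rg hr' eq_sq]]]] := same_column_red_square beh hga mug gnu
    (esym eq_fact) (esym deg_gh) (esym eq_col) le_be_mu.
  by exists t; right; apply: red_square_iter_Fmap eq_sq.
Qed.

Lemma Fmap_cmp (x y : Mor L) : blue x -> blue y -> src x = rng y ->
  F (cmp x y) = cmp (F x) (F y) /\ src (F x) = rng (F y).
Proof.
move=> blue_x blue_y xy.
have [f [f1 [degf degf1 fx Fxf1 [_ eq_fx]]]] := Fmap_spec blue_x.
have [g [f2 [degg degf2 gy Fyf2 [_ eq_gy]]]] := Fmap_spec blue_y.
have eq_f1 : f1 = g.
  apply: red_edge_out_uniq => //.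
  by rewrite gy -xy -(src_cmp fx) eq_fx (src_cmp Fxf1).
subst g.
have FxFy : src (F x) = rng (F y) by rewrite Fxf1 -(rng_cmp gy) eq_gy (rng_cmp Fyf2).
split=> //.
have blue_xy : blue (cmp x y) by rewrite /blue (deg_cmp xy) /dadd /= blue_x blue_y.
apply: (Frel_functional (Fmap_spec blue_xy)).
exists f, f2; split; rewrite ?(rng_cmp xy) ?(src_cmp FxFy) //; split.
  by rewrite /blue (deg_cmp FxFy) /dadd /= (Fmap_blue blue_x) (Fmap_blue blue_y).
by rewrite -(cmpA fx xy) eq_fx (cmpA Fxf1 gy) eq_gy -(cmpA FxFy Fyf2).
Qed.

Lemma iter_Fmap_cmp k (x y : Mor L) : blue x -> blue y -> src x = rng y ->
  iter k F (cmp x y) = cmp (iter k F x) (iter k F y) /\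
  src (iter k F x) = rng (iter k F y).
Proof.
move=> blue_x blue_y xy; elim: k => [|k [IHk IHsrc]] //=.
by rewrite IHk; apply: Fmap_cmp IHsrc; apply: iter_Fmap_blue.
Qed.

Lemma rng_cmps (b : Mor L) bs : composable_seq b bs -> rng (cmps b bs) = rng b.
Proof.
elim: bs b => [|c cs IHcs] b //= /andP[/eqP bc path_cs].
by rewrite rng_cmp // IHcs.
Qed.

Lemma blue_cmps (b : Mor L) bs : {in b :: bs, forall x, blue x} ->
  composable_seq b bs -> blue (cmps b bs).
Proof.
elim: bs b => [|c cs IHcs] b blue_bs; first by move=> _; apply: blue_bs; rewrite mem_head.
case/andP=> /eqP bc path_cs /=.
have blue_cs : blue (cmps c cs).
  by apply: IHcs path_cs => x xcs; apply: blue_bs; rewrite inE xcs orbT.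
have blue_b : blue b by apply: blue_bs; rewrite mem_head.
by rewrite /blue deg_cmp ?rng_cmps // /dadd /= blue_b blue_cs.
Qed.

Lemma iter_Fmap_cmps_fixed k (b : Mor L) bs : {in b :: bs, forall x, blue x} ->
  composable_seq b bs ->
  iter k F (cmps b bs) = cmps b bs <-> {in b :: bs, forall x, iter k F x = x}.
Proof.
elim: bs b => [|c cs IHcs] b blue_bs.
  by split=> [fixb x /[!inE] /eqP -> | ->] //; rewrite mem_head.
case/andP=> /eqP bc path_cs /=.
have blue_b : blue b by apply: blue_bs; rewrite mem_head.
have blue_cs : {in c :: cs, forall x, blue x}.
  by move=> x xcs; apply: blue_bs; rewrite inE xcs orbT.
have b_cs : src b = rng (cmps c cs) by rewrite rng_cmps.
have [-> src_iter] := iter_Fmap_cmp k blue_b (blue_cmps blue_cs path_cs) b_cs.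
split=> [eq_cmp | fix_bs].
- have [fixb fixcs] := cmp_injl src_iter b_cs eq_cmp (iter_Fmap_deg k blue_b).
  move=> x /[!inE] /orP[/eqP -> // | xcs].
  exact: (proj1 (IHcs c blue_cs path_cs) fixcs).
- rewrite fix_bs ?mem_head // (proj2 (IHcs c blue_cs path_cs)) // => x xcs.
  by rewrite fix_bs // inE xcs orbT.
Qed.

Section Levels.
Variable lev : Obj L -> nat.
Hypothesis lev_finite : forall n, exists s : seq (Obj L), forall v, lev v = n -> v \in s.
Hypothesis lev_red : forall f : Mor L, deg f = e2 -> lev (rng f) = lev (src f).
Hypothesis HR : row_finite L.

Lemma iter_Fmap_lev k (a : Mor L) : blue a -> lev (rng (iter k F a)) = lev (rng a).
Proof.
move=> blue_a; elim: k => //= k <-.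
have [f [f1 [degf degf1 fa Ff1 [_ eq_fa]]]] := Fmap_spec (iter_Fmap_blue k blue_a).
by rewrite -(rng_cmp Ff1) -eq_fa (rng_cmp fa) lev_red // fa.
Qed.

Lemma row_finite_level n m : exists s : seq (Mor L),
  forall y, deg y = n -> lev (rng y) = m -> y \in s.
Proof.
have [vs lev_vs] := lev_finite m.
suff [s s_vs] : exists s : seq (Mor L), forall y, deg y = n -> rng y \in vs -> y \in s.
  by exists s => y degy /lev_vs; apply: s_vs.
elim: vs {lev_vs} => [|v vs [s2 s2_vs]]; first by exists [::].
have [s1 s1_v] := HR v n.
exists (s1 ++ s2) => y degy; rewrite inE mem_cat => /orP[/eqP yv | yvs].
- by rewrite s1_v.
- by rewrite s2_vs ?orbT.
Qed.

Lemma Fmap_returns (x : Mor L) : blue x -> exists2 k, 0 < k & iter k F x = x.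
Proof.
move=> blue_x; have [s s_orbit] := row_finite_level (deg x) (lev (rng x)).
apply: (iter_returns Fmap_blue Fmap_inj blue_x) => k.
by apply: s_orbit; rewrite ?iter_Fmap_deg ?iter_Fmap_lev.
Qed.

Lemma ordF_spec (x : Mor L) : blue x ->
  0 < ordF x /\ forall k, iter k F x = x <-> ordF x %| k.
Proof.
by case/Fmap_returns/iter_period=> m m_gt0 fixP; rewrite (ordF_char m_gt0 fixP).
Qed.

Lemma ordF_iter_Fmap t (h : Mor L) : blue h -> ordF (iter t F h) = ordF h.
Proof.
move=> blue_h; have [ordF_gt0 fixP] := ordF_spec blue_h.
apply: ordF_char ordF_gt0 _ => k.
rewrite -fixP; exact: (iter_fixed_shift (P := @blue L) Fmap_blue Fmap_inj k t blue_h).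
Qed.

Lemma ordF_same_column (mu g nu be h ga : Mor L) :
  src mu = rng g -> src g = rng nu -> src be = rng h -> src h = rng ga ->
  cmp mu (cmp g nu) = cmp be (cmp h ga) ->
  blue h -> deg g = deg h -> (deg mu).1 = (deg be).1 -> ordF g = ordF h.
Proof.
move=> mug gnu beh hga eq_fact blue_h deg_gh eq_col.
have blue_g : blue g by rewrite /blue deg_gh.
have [t [-> | ->]] := same_column_iter_Fmap mug gnu beh hga eq_fact blue_h deg_gh eq_col.
- exact: ordF_iter_Fmap.
- by rewrite ordF_iter_Fmap.
Qed.

Lemma ordF_cmps (b : Mor L) bs : {in b :: bs, forall x, blue x} ->
  composable_seq b bs -> ordF (cmps b bs) = foldr lcmn 1 (map (@ordF L) (b :: bs)).
Proof.
move=> blue_bs path_bs; apply: ordF_char => [|k].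
  rewrite foldr_lcmn_gt0 // all_map; apply/allP => x x_bs /=.
  exact: (ordF_spec (blue_bs x x_bs)).1.
rewrite iter_Fmap_cmps_fixed // dvdn_foldr_lcmn all_map.
split=> [fix_bs | /allP dvd_bs x x_bs].
- by apply/allP => x x_bs /=; apply/(ordF_spec (blue_bs x x_bs)).2/fix_bs.
- exact/(ordF_spec (blue_bs x x_bs)).2/dvd_bs.
Qed.

End Levels.
End RedCycles.
End TwoGraphs.

Theorem lemma5p2 (L : graph2) (N : option nat) (lev : Obj L -> nat) :
  is_2graph L -> row_finite L -> bratteli N lev ->
  (forall (a mu g nu be h ga : Mor L),
      src mu = rng g -> src g = rng nu -> src be = rng h -> src h = rng ga ->
      a = cmp mu (cmp g nu) -> a = cmp be (cmp h ga) ->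
      deg g = e1 -> deg h = e1 -> (deg mu).1 = (deg be).1 ->
      ordF g = ordF h) /\
  (forall (b : Mor L) (bs : seq (Mor L)),
      all (fun x => deg x == e1) (b :: bs) -> composable_seq b bs ->
      ordF (cmps b bs) = foldr lcmn 1%N (map (@ordF L) (b :: bs))).
Proof.
move=> HL HR [_ [_ [lev_finite [_ [_ [_ [red_cycles lev_red]]]]]]].
split=> [a mu g nu be h ga mug gnu beh hga -> | b bs /allP edges_bs path_bs].
- by move=> eq_fact degg degh; apply: ordF_same_column eq_fact _ _;
    rewrite /blue ?degg ?degh.
- apply: ordF_cmps => // x /edges_bs /eqP degx.
  by rewrite /blue degx.
Qed.
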